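(* Let $(X,d)$ be a Ptolemaic metric space and let $p\in X$. Then the function $$\tilde\tau_p(x,y)=\log\Big(1+\frac{d(x,y)}{\sqrt{d(x,p)d(y,p)}}\Big)$$ is a metric on $X\setminus\{p\}$.
   Context: A metric space $(X,d)$ is Ptolemaic if $d(x,y)d(z,w)\leq d(x,z)d(y,w)+d(x,w)d(y,z)$ for all $x,y,z,w\in X$. *)

From Stdlib Require Import Reals.
Open Scope R_scope.

Definition is_metric {X : Type} (d : X -> X -> R) : Prop :=
  (forall x y, 0 <= d x y) /\
  (forall x y, d x y = 0 <-> x = y) /\
  (forall x y, d x y = d y x) /\
  (forall x y z, d x z <= d x y + d y z).

Definition ptolemaic {X : Type} (d : X -> X -> R) : Prop :=
  forall x y z w, d x y * d z w <= d x z * d y w + d x w * d y z.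

Definition punctured (X : Type) (p : X) : Type := { x : X | x <> p }.

Definition tau_tilde {X : Type} (d : X -> X -> R) (p : X)
  (x y : punctured X p) : R :=
  ln (1 + d (proj1_sig x) (proj1_sig y)
          / sqrt (d (proj1_sig x) p * d (proj1_sig y) p)).

(* Write a = sqrt d(x,p), b = sqrt d(y,p), c = sqrt d(z,p) and u = d(x,y),
   v = d(y,z), D = d(x,z).  Since the logarithm turns products into sums, the
   triangle inequality for tau_tilde is the multiplicative inequality
   1 + D/(ac) <= (1 + u/(ab)) (1 + v/(bc)), i.e. D b^2 <= u b c + v a b + u v.
   Ptolemy's inequality for x, z, y, p gives D b^2 <= u c^2 + v a^2, and the
   triangle inequality gives c^2 <= b^2 + v, hence c^2 <= b c + v, and
   likewise a^2 <= a b + u.  If c <= b or a <= b this already suffices;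
   if both c > b and a > b, the triangle inequality D <= u + v does. *)

From Stdlib Require Import Reals Lra Psatz ProofIrrelevance.
Open Scope R_scope.

Lemma ln_le (x y : R) : 0 < x -> x <= y -> ln x <= ln y.
Proof.
  intros Hx [Hxy | ->]; [left; exact (ln_increasing x y Hx Hxy) | lra].
Qed.

Lemma is_metric_ln_1p {Y : Type} (delta : Y -> Y -> R) :
  (forall x y, 0 <= delta x y) ->
  (forall x y, delta x y = 0 <-> x = y) ->
  (forall x y, delta x y = delta y x) ->
  (forall x y z, 1 + delta x z <= (1 + delta x y) * (1 + delta y z)) ->
  is_metric (fun x y => ln (1 + delta x y)).
Proof.
  intros Hnn Hid Hsym Hmul.
  split; [| split; [| split]].
  - intros x y. rewrite <- ln_1. apply ln_le; [lra |].
    specialize (Hnn x y); lra.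
  - intros x y. rewrite <- (Hid x y). split.
    + intros H. rewrite <- ln_1 in H.
      apply ln_inv in H; [lra | specialize (Hnn x y); lra | lra].
    + intros ->. rewrite Rplus_0_r. exact ln_1.
  - intros x y. now rewrite Hsym.
  - intros x y z.
    pose proof (Hnn x y). pose proof (Hnn y z). pose proof (Hnn x z).
    rewrite <- ln_mult by lra.
    apply ln_le; [lra | apply Hmul].
Qed.

Lemma sqr_le_mul_add (a b u : R) :
  0 <= a -> 0 <= b -> 0 <= u -> a ^ 2 <= b ^ 2 + u -> a ^ 2 <= a * b + u.
Proof.
  intros Ha Hb Hu H. destruct (Rle_lt_dec a b).
  - assert (a * a <= a * b) by (apply Rmult_le_compat_l; lra). nra.
  - assert (0 <= b * (a - b)) by (apply Rmult_le_pos; lra). nra.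
Qed.

Lemma ptolemy_triangle_bound (a b c u v D : R) :
  0 <= a -> 0 <= b -> 0 <= c -> 0 <= u -> 0 <= v ->
  D * b ^ 2 <= u * c ^ 2 + v * a ^ 2 -> D <= u + v ->
  c ^ 2 <= b ^ 2 + v -> a ^ 2 <= b ^ 2 + u ->
  D * b ^ 2 <= u * b * c + v * a * b + u * v.
Proof.
  intros Ha Hb Hc Hu Hv Hptol Htri Hcb Hab.
  pose proof (sqr_le_mul_add c b v Hc Hb Hv Hcb) as Hc_mul.
  pose proof (sqr_le_mul_add a b u Ha Hb Hu Hab) as Ha_mul.
  destruct (Rle_lt_dec c b); [| destruct (Rle_lt_dec a b)].
  - assert (u * c ^ 2 <= u * (b * c)) by (apply Rmult_le_compat_l; nra).
    assert (v * a ^ 2 <= v * (a * b + u)) by (apply Rmult_le_compat_l; lra).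
    lra.
  - assert (u * c ^ 2 <= u * (b * c + v)) by (apply Rmult_le_compat_l; lra).
    assert (v * a ^ 2 <= v * (a * b)) by (apply Rmult_le_compat_l; nra).
    lra.
  - assert (D * b ^ 2 <= (u + v) * b ^ 2) by (apply Rmult_le_compat_r; nra).
    assert (u * b ^ 2 <= u * (b * c)) by (apply Rmult_le_compat_l; nra).
    assert (v * b ^ 2 <= v * (a * b)) by (apply Rmult_le_compat_l; nra).
    assert (0 <= u * v) by (apply Rmult_le_pos; lra).
    lra.
Qed.

Lemma one_add_div_submult (a b c u v D : R) :
  0 < a -> 0 < b -> 0 < c ->
  D * b ^ 2 <= u * b * c + v * a * b + u * v ->
  1 + D / (a * c) <= (1 + u / (a * b)) * (1 + v / (b * c)).
Proof.
  intros Ha Hb Hc H.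
  assert (Hgap : (1 + u / (a * b)) * (1 + v / (b * c)) - (1 + D / (a * c))
                 = (u * b * c + v * a * b + u * v - D * b ^ 2)
                   / (a * b ^ 2 * c)) by (field; lra).
  assert (0 <= (u * b * c + v * a * b + u * v - D * b ^ 2) / (a * b ^ 2 * c)).
  { apply Rle_mult_inv_pos; [lra |].
    apply Rmult_lt_0_compat; [| exact Hc].
    apply Rmult_lt_0_compat; [exact Ha | apply pow_lt, Hb]. }
  lra.
Qed.

Lemma metric_dist_pos {X : Type} (d : X -> X -> R) (x y : X) :
  is_metric d -> x <> y -> 0 < d x y.
Proof.
  intros [Hnn [Hid _]] Hxy.
  destruct (Hnn x y) as [| H]; [assumption |].
  exfalso; apply Hxy, Hid; auto.
Qed.

Section ScaledDistance.

Variables (X : Type) (d : X -> X -> R) (p : X).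
Hypothesis d_metric : is_metric d.

Definition scaled_dist (x y : X) : R := d x y / sqrt (d x p * d y p).

Lemma sqrt_dist_mul (x y : X) : x <> p -> y <> p ->
  sqrt (d x p * d y p) = sqrt (d x p) * sqrt (d y p).
Proof.
  intros Hx Hy. apply sqrt_mult; left; now apply metric_dist_pos.
Qed.

Lemma sqrt_dist_pos (x : X) : x <> p -> 0 < sqrt (d x p).
Proof. intros Hx. apply sqrt_lt_R0. now apply metric_dist_pos. Qed.

Lemma scaled_dist_ge0 (x y : X) : x <> p -> y <> p -> 0 <= scaled_dist x y.
Proof.
  intros Hx Hy. unfold scaled_dist. rewrite sqrt_dist_mul by assumption.
  apply Rle_mult_inv_pos; [apply d_metric |].
  apply Rmult_lt_0_compat; now apply sqrt_dist_pos.
Qed.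

Lemma scaled_dist_eq0 (x y : X) : x <> p -> y <> p ->
  scaled_dist x y = 0 <-> x = y.
Proof.
  intros Hx Hy. unfold scaled_dist. rewrite sqrt_dist_mul by assumption.
  pose proof (sqrt_dist_pos x Hx) as Ha. pose proof (sqrt_dist_pos y Hy) as Hb.
  destruct d_metric as [_ [Hid _]].
  rewrite <- Hid. split.
  - intros H0.
    replace (d x y) with (d x y / (sqrt (d x p) * sqrt (d y p))
                          * (sqrt (d x p) * sqrt (d y p))) by (field; lra).
    rewrite H0. ring.
  - intros ->. apply Rdiv_0_l.
Qed.

Lemma scaled_dist_sym (x y : X) : scaled_dist x y = scaled_dist y x.
Proof.
  unfold scaled_dist. destruct d_metric as [_ [_ [Hsym _]]].
  now rewrite Hsym, Rmult_comm.
Qed.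

Hypothesis d_ptolemaic : ptolemaic d.

Lemma scaled_dist_submult (x y z : X) : x <> p -> y <> p -> z <> p ->
  1 + scaled_dist x z <= (1 + scaled_dist x y) * (1 + scaled_dist y z).
Proof.
  intros Hx Hy Hz. unfold scaled_dist. rewrite !sqrt_dist_mul by assumption.
  destruct d_metric as [Hnn [_ [Hsym Htri]]].
  assert (Hsq : forall w, w <> p -> sqrt (d w p) ^ 2 = d w p).
  { intros w Hw. apply pow2_sqrt. left. now apply metric_dist_pos. }
  apply one_add_div_submult; try now apply sqrt_dist_pos.
  apply ptolemy_triangle_bound; try apply sqrt_pos; try apply Hnn;
    rewrite ?Hsq by assumption.
  - rewrite (Hsym y z), (Rmult_comm (d z y)). apply d_ptolemaic.
  - apply Htri.
  - rewrite (Hsym y z), Rplus_comm. apply Htri.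
  - rewrite Rplus_comm. apply Htri.
Qed.

End ScaledDistance.

Arguments scaled_dist {X} d p x y.

Theorem theorem2p2 (X : Type) (d : X -> X -> R) (p : X) :
  is_metric d -> ptolemaic d -> is_metric (tau_tilde d p).
Proof.
  intros Hmetric Hptol.
  apply (is_metric_ln_1p
           (fun x y : punctured X p => scaled_dist d p (proj1_sig x) (proj1_sig y))).
  - intros [x Hx] [y Hy]. now apply scaled_dist_ge0.
  - intros [x Hx] [y Hy]. cbn. rewrite scaled_dist_eq0 by assumption. split.
    + apply subset_eq_compat.
    + intros H. now inversion H.
  - intros x y. apply scaled_dist_sym, Hmetric.
  - intros [x Hx] [y Hy] [z Hz]. now apply scaled_dist_submult.
Qed.
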